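(* Let $n\ge 2$ and consider the potential $V$ of the context with $\sigma=0$. There is a critical point $\mathbf a=(a_1,\dots,a_n)$ of $V$ on $\Omega$ (a symmetric collinear equilibrium) such that every $a_j$ lies on the real axis, $a_j=(p_j,0)$ with $p_j\in\mathbb R$, and $$p_1<p_2<\dots<p_n,\qquad p_{n+1-j}=-p_j\quad (j=1,\dots,n).$$
   Context: For $u=(u_1,\dots,u_n)\in(\mathbb R^2)^n$ let $$V(u)=\sum_{j=1}^{n-1}U(|u_{j+1}-u_j|^2)+\sum_{1\le j<k\le n}W(|u_j-u_k|^2),$$ where $U(x)=x-2x^{1/2}$ and $W\in C^2((0,\infty))$ satisfies $\lim_{x\to0}W(x)=\lim_{x\to0}(-W'(x))=+\infty$ and $\lim_{x\to\infty}W(x)=\lim_{x\to\infty}W'(x)=0$. $V$ is defined on $\Omega=\{u\in\mathbb R^{2n}:u_j\ne u_k\text{ for }j\ne k\}$; a critical point means $\nabla V(\mathbf a)=0$. *)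

From Stdlib Require Import Reals.
From Coquelicot Require Import Coquelicot.
Open Scope R_scope.

(* points of R^2 are pairs; a configuration u = (u_1,...,u_n) is encoded
   0-indexed as u : nat -> R * R, only u 0, ..., u (n-1) being relevant *)
Definition pt := (R * R)%type.

Definition dist2 (x y : pt) : R :=
  (fst x - fst y) ^ 2 + (snd x - snd y) ^ 2.

Fixpoint sumR (n : nat) (f : nat -> R) : R :=
  match n with
  | O => 0
  | S m => sumR m f + f m
  end.

Definition U (x : R) : R := x - 2 * sqrt x.

Definition V (W : R -> R) (n : nat) (u : nat -> pt) : R :=
  sumR (n - 1) (fun j => U (dist2 (u (S j)) (u j)))
  + sumR n (fun k => sumR k (fun j => W (dist2 (u j) (u k)))).

Definition in_Omega (n : nat) (u : nat -> pt) : Prop :=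
  forall j k : nat, (j < n)%nat -> (k < n)%nat -> j <> k -> u j <> u k.

Definition upd (u : nat -> pt) (j : nat) (x : pt) : nat -> pt :=
  fun i => if Nat.eqb i j then x else u i.

Definition critical_point (W : R -> R) (n : nat) (a : nat -> pt) : Prop :=
  forall j : nat, (j < n)%nat ->
    is_derive (fun t => V W n (upd a j (fst (a j) + t, snd (a j)))) 0 0 /\
    is_derive (fun t => V W n (upd a j (fst (a j), snd (a j) + t))) 0 0.

Definition C2_pos (W : R -> R) : Prop :=
  forall x : R, 0 < x ->
    ex_derive W x /\
    (exists eps : posreal, forall y, Rabs (y - x) < eps -> ex_derive W y) /\
    ex_derive (Derive W) x /\
    (exists eps : posreal, forall y, Rabs (y - x) < eps -> ex_derive (Derive W) y) /\
    continuous (Derive_n W 2) x.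

Definition W_hyp (W : R -> R) : Prop :=
  C2_pos W /\
  filterlim W (at_right 0) (Rbar_locally p_infty) /\
  filterlim (fun x => - Derive W x) (at_right 0) (Rbar_locally p_infty) /\
  is_lim W p_infty 0 /\
  is_lim (Derive W) p_infty 0.

(* Restrict [V] to symmetric configurations on the real axis, parametrized by the
   [m = n / 2] gaps between consecutive points of the right half.  On positive gaps this
   restriction is coercive: a vanishing gap makes some [W] term blow up, a large gap makes
   some spring term [U] blow up, and all the other terms are bounded below.  Hence it
   attains its minimum on a compact box of gaps, where its derivative in every gap
   vanishes.  Since [V] is invariant under the reflection [j |-> n-1-j], [x |-> -x], the
   horizontal partial derivatives at a symmetric configuration are antisymmetric under
   [j |-> n-1-j], while each gap derivative is a sum of their differences over mirror pairs;
   so all of them vanish.  The vertical partial derivatives vanish at every configuration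
   on the real axis, as they only see vertical separations. *)

From Stdlib Require Import Reals Lra Lia Classical FunctionalExtensionality.
From Coquelicot Require Import Coquelicot.
From mathcomp Require all_boot all_order all_algebra all_classical all_reals topology normedtype
  derive Rstruct Rstruct_topology.
Open Scope R_scope.

(** * Finite sums *)

Lemma sumR_ext n f g : (forall i, (i < n)%nat -> f i = g i) -> sumR n f = sumR n g.
Proof.
  induction n as [|n IH]; intros Hfg; simpl; auto.
  rewrite IH, Hfg; auto; intros; apply Hfg; lia.
Qed.

Lemma sumR_linear n k1 k2 f g :
  sumR n (fun i => k1 * f i + k2 * g i) = k1 * sumR n f + k2 * sumR n g.
Proof. induction n as [|n IH]; simpl; [|rewrite IH]; ring. Qed.

Lemma sumR_eq0 n f : (forall i, (i < n)%nat -> f i = 0) -> sumR n f = 0.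
Proof.
  intros Hf. rewrite (sumR_ext n f (fun i => 0 * f i + 0 * f i)).
  - rewrite sumR_linear; ring.
  - intros i Hi; rewrite Hf; auto; ring.
Qed.

Lemma sumR_Sl n f : sumR (S n) f = f O + sumR n (fun i => f (S i)).
Proof. induction n as [|n IH]; simpl in *; [|rewrite IH]; ring. Qed.

Lemma sumR_rev n f : sumR n f = sumR n (fun i => f (n - 1 - i)%nat).
Proof.
  induction n as [|n IH]; auto.
  rewrite (sumR_Sl n (fun i => f (S n - 1 - i)%nat)).
  change (sumR (S n) f) with (sumR n f + f n).
  rewrite IH, Rplus_comm. replace (S n - 1 - 0)%nat with n by lia. f_equal.
  apply sumR_ext; intros; f_equal; lia.
Qed.

Lemma sumR_gt0 n f : (0 < n)%nat -> (forall i, (i < n)%nat -> 0 < f i) -> 0 < sumR n f.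
Proof.
  induction n as [|n IH]; intros Hn Hf; [lia|]. simpl.
  assert (0 < f n) by (apply Hf; lia).
  destruct n; [simpl; lra|].
  assert (0 < sumR (S n) f) by (apply IH; [lia|intros; apply Hf; lia]). lra.
Qed.

Lemma sumR_ge n f c : (forall i, (i < n)%nat -> - c <= f i) -> - INR n * c <= sumR n f.
Proof.
  induction n as [|n IH]; intros Hf; [simpl; lra|].
  change (sumR (S n) f) with (sumR n f + f n). rewrite S_INR.
  assert (- INR n * c <= sumR n f) by (apply IH; intros; apply Hf; lia).
  assert (- c <= f n) by (apply Hf; lia). lra.
Qed.

Lemma sumR_ge_term n f c j : (j < n)%nat -> 0 <= c ->
  (forall i, (i < n)%nat -> i <> j -> - c <= f i) -> f j - INR n * c <= sumR n f.
Proof.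
  induction n as [|n IH]; intros Hj Hc Hf; [lia|].
  change (sumR (S n) f) with (sumR n f + f n). rewrite S_INR.
  destruct (Nat.eq_dec j n) as [->|Hjn].
  - assert (- INR n * c <= sumR n f) by (apply sumR_ge; intros; apply Hf; lia). lra.
  - assert (f j - INR n * c <= sumR n f) by (apply IH; [lia|auto|intros; apply Hf; lia]).
    assert (- c <= f n) by (apply Hf; lia). lra.
Qed.

Lemma is_derive_sumR n (f : nat -> R -> R) (d : nat -> R) x :
  (forall i, (i < n)%nat -> is_derive (f i) x (d i)) ->
  is_derive (fun t => sumR n (fun i => f i t)) x (sumR n d).
Proof.
  induction n as [|n IH]; simpl; intros Hf.
  - auto_derive; auto.
  - apply (is_derive_plus (fun t => sumR n (fun i => f i t)) (f n)).
    + apply IH; intros; apply Hf; lia.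
    + apply Hf; lia.
Qed.

Definition indic (i : nat) : nat -> R := fun k => if Nat.eqb k i then 1 else 0.

Lemma sumR_indic n i : sumR n (indic i) = if (i <? n)%nat then 1 else 0.
Proof.
  induction n as [|n IH]; simpl; [destruct (Nat.ltb_spec i 0); lia || ring|].
  rewrite IH; unfold indic.
  destruct (Nat.ltb_spec i n), (Nat.ltb_spec i (S n)), (Nat.eqb_spec n i); lia || ring.
Qed.

Definition pair_sum n (h : nat -> nat -> R) : R :=
  sumR n (fun k => sumR k (fun j => h j k)).

Lemma pair_sum_by_rows n h :
  pair_sum n h = sumR n (fun j => sumR (n - 1 - j) (fun i => h j (S j + i)%nat)).
Proof.
  unfold pair_sum; induction n as [|n IH]; auto.
  change (sumR (S n) ?F) with (sumR n F + F n). rewrite IH.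
  replace (S n - 1 - n)%nat with O by lia. simpl (sumR 0 _). rewrite Rplus_0_r.
  transitivity (sumR n (fun j => 1 * sumR (n - 1 - j) (fun i => h j (S j + i)%nat) + 1 * h j n)).
  { rewrite sumR_linear; ring. }
  apply sumR_ext; intros j Hj. replace (S n - 1 - j)%nat with (S (n - 1 - j)) by lia.
  simpl. replace (S (j + (n - 1 - j))) with n by lia. ring.
Qed.

Lemma pair_sum_rev n h : pair_sum n h = pair_sum n (fun j k => h (n - 1 - k)%nat (n - 1 - j)%nat).
Proof.
  rewrite pair_sum_by_rows. unfold pair_sum. rewrite (sumR_rev n (fun k => sumR k _)).
  apply sumR_ext; intros k Hk. rewrite sumR_rev.
  apply sumR_ext; intros j Hj. f_equal; lia.
Qed.

(** * Minima of functions of finitely many coordinates *)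

Definition continuous_coords (m : nat) (f : (nat -> R) -> R) (x : nat -> R) : Prop :=
  forall eps, 0 < eps -> exists delta, 0 < delta /\ forall y,
    (forall i, (i < m)%nat -> Rabs (y i - x i) < delta) -> Rabs (f y - f x) < eps.

Definition in_box (m : nat) (lo hi : R) (x : nat -> R) : Prop :=
  forall i, (i < m)%nat -> lo <= x i <= hi.

Lemma continuous_coords_ext m f x y : continuous_coords m f x ->
  (forall i, (i < m)%nat -> y i = x i) -> f y = f x.
Proof.
  intros Hc Hy. destruct (Req_dec (f y) (f x)) as [|Hne]; auto.
  assert (Hp : 0 < Rabs (f y - f x)) by (apply Rabs_pos_lt; lra).
  destruct (Hc _ Hp) as [d [d0 Hd]].
  assert (Rabs (f y - f x) < Rabs (f y - f x)); [|lra].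
  apply Hd; intros i Hi; rewrite Hy by auto; rewrite Rminus_diag, Rabs_R0; auto.
Qed.

Lemma continuous_coords_const m c x : continuous_coords m (fun _ => c) x.
Proof. intros eps Heps; exists 1; split; [lra|]. intros; rewrite Rminus_diag, Rabs_R0; auto. Qed.

Lemma continuous_coords_coord m i x : (i < m)%nat -> continuous_coords m (fun y => y i) x.
Proof. intros Hi eps Heps; exists eps; split; auto. Qed.

Lemma continuous_coords_plus m f g x : continuous_coords m f x -> continuous_coords m g x ->
  continuous_coords m (fun y => f y + g y) x.
Proof.
  intros Hf Hg eps Heps.
  destruct (Hf (eps / 2)) as [d1 [Hd1 H1]]; [lra|].
  destruct (Hg (eps / 2)) as [d2 [Hd2 H2]]; [lra|].
  exists (Rmin d1 d2); split; [apply Rmin_pos; auto|]. intros y Hy.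
  assert (Rabs (f y - f x) < eps / 2).
  { apply H1; intros i Hi; specialize (Hy i Hi); pose proof (Rmin_l d1 d2); lra. }
  assert (Rabs (g y - g x) < eps / 2).
  { apply H2; intros i Hi; specialize (Hy i Hi); pose proof (Rmin_r d1 d2); lra. }
  replace (f y + g y - (f x + g x)) with ((f y - f x) + (g y - g x)) by ring.
  pose proof (Rabs_triang (f y - f x) (g y - g x)). lra.
Qed.

Lemma continuous_coords_comp m (h : R -> R) f x : continuity_pt h (f x) ->
  continuous_coords m f x -> continuous_coords m (fun y => h (f y)) x.
Proof.
  intros Hh Hf eps Heps. destruct (Hh eps Heps) as [d [Hd Hhd]].
  destruct (Hf d Hd) as [d' [Hd' Hfd']]. exists d'; split; auto.
  intros y Hy. destruct (Req_dec (f y) (f x)) as [->|Hne].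
  - rewrite Rminus_diag, Rabs_R0; auto.
  - apply (Hhd (f y)). split; [split; [exact I|auto]|apply Hfd', Hy].
Qed.

Lemma continuous_coords_sumR m N (F : nat -> (nat -> R) -> R) x :
  (forall k, (k < N)%nat -> continuous_coords m (F k) x) ->
  continuous_coords m (fun y => sumR N (fun k => F k y)) x.
Proof.
  induction N as [|N IH]; intros HF; simpl.
  - apply continuous_coords_const.
  - apply (continuous_coords_plus m (fun y => sumR N (fun k => F k y)) (F N)).
    + apply IH; intros; apply HF; lia.
    + apply HF; lia.
Qed.

Definition clamp (lo hi x : R) : R := Rmax lo (Rmin hi x).

Lemma clamp_in_bounds lo hi x : lo <= hi -> lo <= clamp lo hi x <= hi.
Proof. intros; unfold clamp, Rmax, Rmin; repeat destruct Rle_dec; lra. Qed.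

Lemma clamp_id lo hi x : lo <= x <= hi -> clamp lo hi x = x.
Proof. intros; unfold clamp, Rmax, Rmin; repeat destruct Rle_dec; lra. Qed.

Lemma clamp_1_lipschitz lo hi a b : lo <= hi ->
  Rabs (clamp lo hi a - clamp lo hi b) <= Rabs (a - b).
Proof.
  intros; unfold clamp, Rmax, Rmin, Rabs;
  repeat destruct Rle_dec; repeat destruct Rcase_abs; lra.
Qed.

Module BoxMinimum.
Import all_boot all_order all_algebra all_classical all_reals topology normedtype derive.
Import Rstruct Rstruct_topology.
Import Order.TTheory GRing.Theory Num.Theory numFieldNormedType.Exports.
Local Open Scope classical_set_scope.
Local Open Scope ring_scope.

Lemma continuous_rV_coordwise (m : nat) (g : 'rV[R]_m -> R) :
  (forall (v : 'rV[R]_m) (eps : R), 0 < eps -> exists2 d : R, 0 < d &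
     forall w : 'rV[R]_m, (forall j, `|w ord0 j - v ord0 j| < d) -> `|g w - g v| < eps) ->
  continuous g.
Proof.
move=> H v A /nbhs_ballP [e e0 HA].
have [d d0 Hd] := H v e e0.
exists (fun i j => ball (v i j) d) => [i j /=|w /= Hw]; first exact: nbhsx_ballx.
apply: HA; rewrite /ball /= -normrN opprB; apply: Hd => j.
by have := Hw ord0 j; rewrite /ball /= -normrN opprB.
Qed.

(* [f] is read on ['rV_m] through coordinates clamped into the box, which makes it
   continuous on all of ['rV_m]. *)
Lemma box_attains_min (m : nat) (lo hi : R) (f : (nat -> R) -> R) : Rle lo hi ->
  (forall x, in_box m lo hi x -> continuous_coords m f x) ->
  exists x, in_box m lo hi x /\ forall y, in_box m lo hi y -> Rle (f x) (f y).
Proof.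
move=> Hlh Hc.
pose tf (v : 'rV[R]_m) : nat -> R :=
  fun i => oapp (fun k : 'I_m => clamp lo hi (v ord0 k)) lo (insub i).
have tf_in v : in_box m lo hi (tf v).
  move=> i _; rewrite /tf; case: insubP => [u _ _|_] /=; first exact: clamp_in_bounds.
  by split; [exact: Rle_refl | exact: Hlh].
pose g v := f (tf v).
have g_cont : continuous g.
  apply: continuous_rV_coordwise => v eps /RltP eps0.
  have [d [/RltP d0 Hd]] := Hc (tf v) (tf_in v) eps eps0.
  exists d => // w Hw; apply/RltP; apply: Hd => i _.
  rewrite /tf; case: insubP => [u _ _|_] /=.
    apply: Rle_lt_trans; first exact: clamp_1_lipschitz.
    by apply/RltP; apply: Hw.
  by rewrite Rminus_diag Rabs_R0; apply/RltP.
pose A := [set v : 'rV[R]_m | forall i, `[lo, hi]%classic (v ord0 i)].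
have A_compact : compact A.
  exact: (@rV_compact _ m (fun=> `[lo, hi]%classic) (fun=> @segment_compact _ lo hi)).
have A_nonempty : A !=set0.
  by exists (const_mx lo) => i /=; rewrite mxE in_itv /= lexx /=; apply/RleP.
have [c _ c_min] := EVT_min_rV A_nonempty A_compact (continuous_subspaceT g_cont).
exists (tf c); split => [|y Hy]; first exact: tf_in.
pose t : 'rV[R]_m := \row_(j < m) y (val j).
have tA : t \in A.
  rewrite inE => i; rewrite /= mxE in_itv /=.
  have /ssrnat.ltP Hi := ltn_ord i; have [h1 h2] := Hy i Hi.
  by apply/andP; split; apply/RleP.
have -> : f y = g t.
  apply/esym/continuous_coords_ext; first exact: Hc.
  move=> i Hi; rewrite /tf; case: insubP => [u _ Hu|] /=.
    by rewrite mxE Hu; apply: clamp_id; apply: Hy.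
  by move/ssrnat.ltP: Hi => ->.
exact/RleP/c_min.
Qed.

End BoxMinimum.

(** * Motions of a configuration *)

Definition shift (a : nat -> pt) (c e : nat -> R) (t : R) : nat -> pt :=
  fun j => (fst (a j) + t * c j, snd (a j) + t * e j).

Definition dist2_rate (a : nat -> pt) (c e : nat -> R) (j k : nat) : R :=
  2 * ((fst (a j) - fst (a k)) * (c j - c k) + (snd (a j) - snd (a k)) * (e j - e k)).

Definition dV (W : R -> R) (n : nat) (a : nat -> pt) (c e : nat -> R) : R :=
  sumR (n - 1) (fun j => Derive U (dist2 (a (S j)) (a j)) * dist2_rate a c e (S j) j)
  + pair_sum n (fun j k => Derive W (dist2 (a j) (a k)) * dist2_rate a c e j k).

Lemma is_derive_dist2_shift F a c e j k : ex_derive F (dist2 (a j) (a k)) ->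
  is_derive (fun t => F (dist2 (shift a c e t j) (shift a c e t k))) 0
    (Derive F (dist2 (a j) (a k)) * dist2_rate a c e j k).
Proof.
  intros HF. rewrite Rmult_comm.
  apply (is_derive_comp F (fun t => dist2 (shift a c e t j) (shift a c e t k))).
  - replace (dist2 (shift a c e 0 j) (shift a c e 0 k)) with (dist2 (a j) (a k))
      by (unfold dist2, shift; simpl; ring).
    apply Derive_correct, HF.
  - unfold dist2, shift, dist2_rate; simpl. auto_derive; auto. ring.
Qed.

Lemma is_derive_V_shift W n a c e :
  (forall x, 0 < x -> ex_derive W x) ->
  (forall j k, (j < n)%nat -> (k < n)%nat -> j <> k -> 0 < dist2 (a j) (a k)) ->
  is_derive (fun t => V W n (shift a c e t)) 0 (dV W n a c e).
Proof.
  intros HW Ha. unfold V, dV, pair_sum.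
  apply (is_derive_plus
    (fun t => sumR (n - 1) (fun j => U (dist2 (shift a c e t (S j)) (shift a c e t j))))
    (fun t => sumR n (fun k => sumR k (fun j => W (dist2 (shift a c e t j) (shift a c e t k)))))).
  - apply (is_derive_sumR (n - 1) (fun j t => U (dist2 (shift a c e t (S j)) (shift a c e t j)))).
    intros j Hj. apply is_derive_dist2_shift.
    assert (0 < dist2 (a (S j)) (a j)) by (apply Ha; lia).
    unfold U; auto_derive; auto.
  - apply (is_derive_sumR n
      (fun k t => sumR k (fun j => W (dist2 (shift a c e t j) (shift a c e t k))))).
    intros k Hk.
    apply (is_derive_sumR k (fun j t => W (dist2 (shift a c e t j) (shift a c e t k)))).
    intros j Hj. apply is_derive_dist2_shift, HW, Ha; lia.
Qed.

Lemma dV_ext W n a c e c' e' : (forall i, (i < n)%nat -> c i = c' i) ->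
  (forall i, (i < n)%nat -> e i = e' i) -> dV W n a c e = dV W n a c' e'.
Proof.
  intros Hc He; unfold dV, pair_sum, dist2_rate; f_equal.
  - apply sumR_ext; intros; rewrite !Hc, !He by lia; auto.
  - apply sumR_ext; intros k Hk; apply sumR_ext; intros j Hj; rewrite !Hc, !He by lia; auto.
Qed.

Lemma dV_linear W n a k1 k2 c1 c2 e1 e2 :
  dV W n a (fun i => k1 * c1 i + k2 * c2 i) (fun i => k1 * e1 i + k2 * e2 i) =
  k1 * dV W n a c1 e1 + k2 * dV W n a c2 e2.
Proof.
  unfold dV, pair_sum.
  rewrite (sumR_ext (n - 1) _ (fun j =>
      k1 * (Derive U (dist2 (a (S j)) (a j)) * dist2_rate a c1 e1 (S j) j)
    + k2 * (Derive U (dist2 (a (S j)) (a j)) * dist2_rate a c2 e2 (S j) j)))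
    by (intros; unfold dist2_rate; ring).
  rewrite (sumR_ext n _ (fun k =>
      k1 * sumR k (fun j => Derive W (dist2 (a j) (a k)) * dist2_rate a c1 e1 j k)
    + k2 * sumR k (fun j => Derive W (dist2 (a j) (a k)) * dist2_rate a c2 e2 j k))).
  - rewrite !sumR_linear; ring.
  - intros k Hk. rewrite <- sumR_linear. apply sumR_ext; intros; unfold dist2_rate; ring.
Qed.

Lemma dV_vertical_on_axis W n a e : (forall i, (i < n)%nat -> snd (a i) = 0) ->
  dV W n a (fun _ => 0) e = 0.
Proof.
  intros Ha; unfold dV, pair_sum, dist2_rate.
  rewrite !sumR_eq0; [ring| |].
  - intros k Hk; apply sumR_eq0; intros j Hj; rewrite !Ha by lia; ring.
  - intros; rewrite !Ha by lia; ring.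
Qed.

Lemma V_ext W n u v : (forall i, (i < n)%nat -> u i = v i) -> V W n u = V W n v.
Proof.
  intros Huv; unfold V; f_equal.
  - apply sumR_ext; intros; rewrite !Huv by lia; auto.
  - apply sumR_ext; intros k Hk; apply sumR_ext; intros j Hj; rewrite !Huv by lia; auto.
Qed.

Definition mirror (n : nat) (u : nat -> pt) : nat -> pt :=
  fun i => (- fst (u (n - 1 - i)%nat), snd (u (n - 1 - i)%nat)).

Lemma V_mirror W n u : V W n (mirror n u) = V W n u.
Proof.
  unfold V; f_equal.
  - rewrite (sumR_rev (n - 1) (fun j => U (dist2 (u (S j)) (u j)))).
    apply sumR_ext; intros j Hj. f_equal. unfold mirror, dist2; simpl.
    replace (n - 1 - S j)%nat with (n - 1 - 1 - j)%nat by lia.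
    replace (n - 1 - j)%nat with (S (n - 1 - 1 - j)) by lia. ring.
  - change (pair_sum n (fun j k => W (dist2 (mirror n u j) (mirror n u k)))
            = pair_sum n (fun j k => W (dist2 (u j) (u k)))).
    rewrite (pair_sum_rev n (fun j k => W (dist2 (u j) (u k)))).
    unfold pair_sum; apply sumR_ext; intros k Hk; apply sumR_ext; intros j Hj.
    f_equal. unfold mirror, dist2; simpl; ring.
Qed.

Definition dx (W : R -> R) (n : nat) (a : nat -> pt) (j : nat) : R :=
  dV W n a (indic j) (fun _ => 0).

(* Moving point [j] to the right is the mirror image of moving point [n-1-j] to the left. *)
Lemma dx_mirror W n a j :
  (forall x, 0 < x -> ex_derive W x) ->
  (forall j k, (j < n)%nat -> (k < n)%nat -> j <> k -> 0 < dist2 (a j) (a k)) ->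
  (forall i, (i < n)%nat -> mirror n a i = a i) ->
  (j < n)%nat -> dx W n a (n - 1 - j) = - dx W n a j.
Proof.
  intros HW Ha Hsym Hj. unfold dx.
  pose (c k := -1 * indic (n - 1 - j) k + 0 * indic (n - 1 - j) k).
  pose (e (k : nat) := -1 * 0 + 0 * 0).
  assert (Hmirror : forall t, V W n (shift a c e t) = V W n (shift a (indic j) (fun _ => 0) t)).
  { intros t. rewrite <- V_mirror. apply V_ext; intros k Hk.
    unfold mirror, shift, c, e, indic; rewrite <- (Hsym k Hk); unfold mirror; simpl.
    destruct (Nat.eqb_spec (n - 1 - k) (n - 1 - j)), (Nat.eqb_spec k j);
      try lia; f_equal; ring. }
  assert (Hsame : dV W n a c e = dV W n a (indic j) (fun _ => 0)).
  { pose proof (is_derive_V_shift W n a c e HW Ha) as Hc.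
    apply (is_derive_ext _ _ _ _ Hmirror) in Hc.
    eapply eq_trans; [symmetry; apply is_derive_unique, Hc|].
    apply is_derive_unique, is_derive_V_shift; auto. }
  unfold c, e in Hsame. rewrite dV_linear in Hsame. lra.
Qed.

(** * Symmetric configurations on the real axis *)

Lemma div2_spec n : n = (2 * Nat.div2 n)%nat \/ n = S (2 * Nat.div2 n).
Proof. pose proof (Nat.div2_odd n) as H. destruct (Nat.odd n); simpl in H; lia. Qed.

Ltac case_nat_tests := repeat match goal with
  | |- context [Nat.leb ?a ?b] => destruct (Nat.leb_spec a b)
  | |- context [Nat.ltb ?a ?b] => destruct (Nat.ltb_spec a b)
  | |- context [Nat.eqb ?a ?b] => destruct (Nat.eqb_spec a b)
  end.

(* With [m = n / 2], the gaps [g 0, ..., g (m-1)] place point [n-m+i] at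
   [g 0 + ... + g i], point [m-1-i] at the mirror image, and the middle point of an odd
   configuration at [0]; for even [n] the central gap is [2 * g 0]. *)
Definition sym_pos (n : nat) (g : nat -> R) (j : nat) : R :=
  if (n - Nat.div2 n <=? j)%nat then sumR (S (j - (n - Nat.div2 n))) g
  else if (j <? Nat.div2 n)%nat then - sumR (S (Nat.div2 n - 1 - j)) g else 0.

Definition positive_gaps (n : nat) (g : nat -> R) : Prop :=
  forall i, (i < Nat.div2 n)%nat -> 0 < g i.

Lemma sym_pos_linear n g e t j :
  sym_pos n (fun i => g i + t * e i) j = sym_pos n g j + t * sym_pos n e j.
Proof.
  unfold sym_pos; case_nat_tests;
  try (rewrite (sumR_ext _ (fun i => g i + t * e i) (fun i => 1 * g i + t * e i))
         by (intros; ring); rewrite sumR_linear); ring.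
Qed.

Lemma sym_pos_antisym n g j : (j < n)%nat -> sym_pos n g (n - 1 - j) = - sym_pos n g j.
Proof.
  intros Hj. pose proof (div2_spec n). unfold sym_pos. case_nat_tests; try lia.
  all: try replace (S (Nat.div2 n - 1 - (n - 1 - j))) with (S (j - (n - Nat.div2 n))) by lia;
       try replace (S (n - 1 - j - (n - Nat.div2 n))) with (S (Nat.div2 n - 1 - j)) by lia;
       ring.
Qed.

Section PositiveGaps.
Variables (n : nat) (g : nat -> R).
Hypothesis (Hn : (2 <= n)%nat) (Hg : positive_gaps n g).

Let sumR_g_pos N : (0 < N)%nat -> (N <= Nat.div2 n)%nat -> 0 < sumR N g.
Proof. intros; apply sumR_gt0; auto; intros; apply Hg; lia. Qed.

Lemma sym_pos_lt_succ j : (S j < n)%nat -> sym_pos n g j < sym_pos n g (S j).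
Proof.
  intros Hj. pose proof (div2_spec n). set (m := Nat.div2 n) in *.
  unfold sym_pos; fold m. case_nat_tests; try lia.
  - replace (S j - (n - m))%nat with (S (j - (n - m))) by lia.
    change (sumR (S (S ?k)) g) with (sumR (S k) g + g (S k)).
    assert (0 < g (S (j - (n - m)))) by (apply Hg; lia). lra.
  - assert (0 < sumR (S (S j - (n - m))) g) by (apply sumR_g_pos; lia).
    assert (0 < sumR (S (m - 1 - j)) g) by (apply sumR_g_pos; lia). lra.
  - assert (0 < sumR (S (S j - (n - m))) g) by (apply sumR_g_pos; lia). lra.
  - replace (m - 1 - j)%nat with (S (m - 1 - S j)) by lia.
    change (sumR (S (S ?k)) g) with (sumR (S k) g + g (S k)).
    assert (0 < g (S (m - 1 - S j))) by (apply Hg; lia). lra.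
  - assert (0 < sumR (S (m - 1 - j)) g) by (apply sumR_g_pos; lia). lra.
Qed.

Lemma sym_pos_lt j k : (j < k)%nat -> (k < n)%nat -> sym_pos n g j < sym_pos n g k.
Proof.
  induction k as [|k IH]; intros Hjk Hk; [lia|].
  destruct (Nat.eq_dec j k) as [->|Hne]; [apply sym_pos_lt_succ; auto|].
  apply Rlt_trans with (sym_pos n g k); [apply IH; lia|apply sym_pos_lt_succ; auto].
Qed.

Lemma sym_pos_gap i : (i < Nat.div2 n)%nat -> exists j, (S j < n)%nat /\
  g i <= sym_pos n g (S j) - sym_pos n g j <= 2 * g i.
Proof.
  intros Hi. pose proof (div2_spec n). set (m := Nat.div2 n) in *.
  assert (Hgi := Hg i Hi).
  exists (n - m + i - 1)%nat. split; [lia|].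
  replace (S (n - m + i - 1)) with (n - m + i)%nat by lia.
  unfold sym_pos; fold m. case_nat_tests; try lia.
  - replace (S (n - m + i - (n - m))) with (S (S (n - m + i - 1 - (n - m)))) by lia.
    replace (S (n - m + i - 1 - (n - m))) with i by lia.
    change (sumR (S i) g) with (sumR i g + g i). lra.
  - replace i with O in * by lia. replace (n - m + 0 - (n - m))%nat with O by lia.
    replace (S (m - 1 - (n - m + 0 - 1))) with 1%nat by lia. simpl. lra.
  - replace i with O in * by lia. replace (n - m + 0 - (n - m))%nat with O by lia.
    simpl. lra.
Qed.

End PositiveGaps.

Lemma sym_pos_indic_diff n i j : (i < Nat.div2 n)%nat -> (j < n)%nat ->
  sym_pos n (indic i) j - sym_pos n (indic (S i)) j
  = indic (n - Nat.div2 n + i) j - indic (Nat.div2 n - 1 - i) j.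
Proof.
  intros Hi Hj. pose proof (div2_spec n). unfold sym_pos.
  rewrite !sumR_indic. unfold indic. case_nat_tests; try lia; ring.
Qed.

Lemma sym_pos_indic_div2 n j : (j < n)%nat -> sym_pos n (indic (Nat.div2 n)) j = 0.
Proof.
  intros Hj. pose proof (div2_spec n). unfold sym_pos.
  rewrite !sumR_indic. case_nat_tests; try lia; ring.
Qed.

Definition sym_config (n : nat) (g : nat -> R) : nat -> pt := fun j => (sym_pos n g j, 0).

Lemma mirror_sym_config n g i : (i < n)%nat -> mirror n (sym_config n g) i = sym_config n g i.
Proof.
  intros Hi. unfold mirror, sym_config; simpl. rewrite sym_pos_antisym by auto.
  f_equal; ring.
Qed.

Lemma dist2_sym_config_pos n g j k : (2 <= n)%nat -> positive_gaps n g ->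
  (j < n)%nat -> (k < n)%nat -> j <> k -> 0 < dist2 (sym_config n g j) (sym_config n g k).
Proof.
  intros Hn Hg Hj Hk Hjk. unfold dist2, sym_config; simpl.
  assert (sym_pos n g j <> sym_pos n g k).
  { destruct (Nat.lt_total j k) as [H|[H|H]]; [|lia|].
    - pose proof (sym_pos_lt n g Hn Hg j k H Hk); lra.
    - pose proof (sym_pos_lt n g Hn Hg k j H Hj); lra. }
  assert (0 < (sym_pos n g j - sym_pos n g k) ^ 2)
    by (rewrite <- Rsqr_pow2; apply Rsqr_pos_lt; lra).
  lra.
Qed.

(** * Existence of a symmetric minimizer *)

Lemma dist2_ge0 p q : 0 <= dist2 p q.
Proof.
  unfold dist2. pose proof (pow2_ge_0 (fst p - fst q)). pose proof (pow2_ge_0 (snd p - snd q)).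
  lra.
Qed.

Lemma U_ge_m1 x : 0 <= x -> -1 <= U x.
Proof.
  intros Hx. unfold U. pose proof (sqrt_sqrt x Hx).
  pose proof (Rle_0_sqr (sqrt x - 1)). unfold Rsqr in *. nra.
Qed.

Lemma U_sq_ge D : 3 <= D -> D <= U (D ^ 2).
Proof. intros HD. unfold U. rewrite <- Rsqr_pow2, sqrt_Rsqr by lra. unfold Rsqr; nra. Qed.

Lemma continuity_pt_of_ex_derive (f : R -> R) x : ex_derive f x -> continuity_pt f x.
Proof. intros H; apply continuity_pt_filterlim; apply (ex_derive_continuous f x H). Qed.

Section StandingAssumptions.
Variable W : R -> R.
Hypothesis HW : W_hyp W.

Lemma W_ex_derive x : 0 < x -> ex_derive W x.
Proof. destruct HW as [HC2 _]. intros Hx; apply (HC2 x Hx). Qed.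

Lemma W_large_near_0 T : exists eps, 0 < eps /\ forall x, 0 < x < eps -> T < W x.
Proof.
  destruct HW as [_ [H0 _]].
  destruct (H0 (fun y => T < y)) as [eps Heps]; [exists T; auto|].
  exists eps; split; [apply cond_pos|]. intros x Hx. apply Heps; [|lra].
  change (Rabs (x - 0) < eps). rewrite Rminus_0_r, Rabs_pos_eq; lra.
Qed.

(* [W] is large near [0], close to [0] at infinity, and continuous in between. *)
Lemma W_bounded_below : exists B, 0 <= B /\ forall x, 0 < x -> - B <= W x.
Proof.
  destruct (W_large_near_0 0) as [e [He Hnear]].
  assert (Hfar : exists X, forall x, X < x -> -1 < W x).
  { destruct HW as [_ [_ [_ [Hinf _]]]].
    destruct (Hinf (fun y => -1 < y)) as [X HX]; [|exists X; auto].
    exists (mkposreal 1 Rlt_0_1). intros y Hy. change (Rabs (y - 0) < 1) in Hy.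
    apply Rabs_def2 in Hy. lra. }
  destruct Hfar as [X HX].
  destruct (continuity_ab_min W (e / 2) (Rmax (e / 2) X)) as [xm [Hxm _]];
    [apply Rmax_l|intros; apply continuity_pt_of_ex_derive, W_ex_derive; lra|].
  exists (Rmax 1 (- W xm)). pose proof (Rmax_l 1 (- W xm)). pose proof (Rmax_r 1 (- W xm)).
  split; [lra|]. intros x Hx.
  destruct (Rlt_dec x e); [pose proof (Hnear x (conj Hx r)); lra|].
  destruct (Rlt_dec X x); [pose proof (HX x r); lra|].
  assert (W xm <= W x) by (apply Hxm; pose proof (Rmax_r (e / 2) X); lra). lra.
Qed.

End StandingAssumptions.

Section LowerBounds.
Variables (W : R -> R) (n : nat) (u : nat -> pt) (B : R).
Hypothesis (HB0 : 0 <= B) (HB : forall x, 0 < x -> - B <= W x).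
Hypothesis Hu : forall j k, (j < n)%nat -> (k < n)%nat -> j <> k -> 0 < dist2 (u j) (u k).

Definition V_floor : R := INR n + INR n * B + INR n * (INR n * B).

Let column_ge k : (k < n)%nat -> - (INR n * B) <= sumR k (fun j => W (dist2 (u j) (u k))).
Proof.
  intros Hk. apply Rle_trans with (- INR k * B).
  - assert (INR k * B <= INR n * B) by (apply Rmult_le_compat_r; auto; apply le_INR; lia).
    lra.
  - apply sumR_ge; intros; apply HB, Hu; lia.
Qed.

Let interaction_ge :
  - INR n * (INR n * B) <= sumR n (fun k => sumR k (fun j => W (dist2 (u j) (u k)))).
Proof. apply sumR_ge; intros; apply column_ge; auto. Qed.

Let chain_ge : - INR n <= sumR (n - 1) (fun j => U (dist2 (u (S j)) (u j))).
Proof.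
  assert (INR (n - 1) <= INR n) by (apply le_INR; lia).
  apply Rle_trans with (- INR (n - 1) * 1); [lra|].
  apply sumR_ge; intros; apply U_ge_m1, dist2_ge0.
Qed.

Lemma V_ge_chain_term j : (S j < n)%nat -> U (dist2 (u (S j)) (u j)) - V_floor <= V W n u.
Proof.
  intros Hj. unfold V, V_floor.
  assert (U (dist2 (u (S j)) (u j)) - INR (n - 1) * 1
          <= sumR (n - 1) (fun i => U (dist2 (u (S i)) (u i)))).
  { apply (sumR_ge_term (n - 1) (fun i => U (dist2 (u (S i)) (u i))) 1 j); [lia|lra|].
    intros; apply U_ge_m1, dist2_ge0. }
  assert (INR (n - 1) <= INR n) by (apply le_INR; lia).
  assert (0 <= INR n * B) by (apply Rmult_le_pos; auto; apply pos_INR).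
  pose proof interaction_ge. lra.
Qed.

Lemma V_ge_interaction_term j : (S j < n)%nat -> W (dist2 (u j) (u (S j))) - V_floor <= V W n u.
Proof.
  intros Hj. unfold V, V_floor.
  assert (W (dist2 (u j) (u (S j))) - INR (S j) * B
          <= sumR (S j) (fun i => W (dist2 (u i) (u (S j))))).
  { apply (sumR_ge_term (S j) (fun i => W (dist2 (u i) (u (S j)))) B j); auto.
    intros; apply HB, Hu; lia. }
  assert (INR (S j) * B <= INR n * B) by (apply Rmult_le_compat_r; auto; apply le_INR; lia).
  assert (sumR (S j) (fun i => W (dist2 (u i) (u (S j)))) - INR n * (INR n * B)
          <= sumR n (fun k => sumR k (fun i => W (dist2 (u i) (u k))))).
  { apply (sumR_ge_term n (fun k => sumR k (fun i => W (dist2 (u i) (u k)))) (INR n * B) (S j));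
      [lia| |].
    - apply Rmult_le_pos; auto; apply pos_INR.
    - intros; apply column_ge; lia. }
  pose proof chain_ge. lra.
Qed.

End LowerBounds.

Lemma continuous_coords_sym_pos n x j : (j < n)%nat ->
  continuous_coords (Nat.div2 n) (fun g => sym_pos n g j) x.
Proof.
  intros Hj. pose proof (div2_spec n). unfold sym_pos.
  destruct (Nat.leb_spec (n - Nat.div2 n) j); [|destruct (Nat.ltb_spec j (Nat.div2 n))].
  - apply continuous_coords_sumR; intros; apply continuous_coords_coord; lia.
  - apply (continuous_coords_comp _ Ropp); [apply continuity_pt_opp, continuity_pt_id|].
    apply continuous_coords_sumR; intros; apply continuous_coords_coord; lia.
  - apply continuous_coords_const.
Qed.

Lemma continuous_coords_dist2_sym_config n x j k : (j < n)%nat -> (k < n)%nat ->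
  continuous_coords (Nat.div2 n) (fun g => dist2 (sym_config n g j) (sym_config n g k)) x.
Proof.
  intros Hj Hk. unfold dist2, sym_config; simpl.
  apply (continuous_coords_plus _ (fun g => (sym_pos n g j - sym_pos n g k) ^ 2));
    [|apply continuous_coords_const].
  apply (continuous_coords_comp _ (fun z => z ^ 2));
    [apply continuity_pt_of_ex_derive; auto_derive; auto|].
  apply continuous_coords_plus; [apply continuous_coords_sym_pos; auto|].
  apply (continuous_coords_comp _ Ropp); [apply continuity_pt_opp, continuity_pt_id|].
  apply continuous_coords_sym_pos; auto.
Qed.

Lemma continuous_coords_V_sym_config W n x : W_hyp W -> (2 <= n)%nat -> positive_gaps n x ->
  continuous_coords (Nat.div2 n) (fun g => V W n (sym_config n g)) x.
Proof.
  intros HW Hn Hx. unfold V.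
  apply (continuous_coords_plus _
    (fun g => sumR (n - 1) (fun j => U (dist2 (sym_config n g (S j)) (sym_config n g j))))).
  - apply (continuous_coords_sumR _ (n - 1)
      (fun j g => U (dist2 (sym_config n g (S j)) (sym_config n g j)))).
    intros j Hj. apply continuous_coords_comp; [|apply continuous_coords_dist2_sym_config; lia].
    apply continuity_pt_of_ex_derive.
    assert (0 < dist2 (sym_config n x (S j)) (sym_config n x j))
      by (apply dist2_sym_config_pos; auto; lia).
    unfold U; auto_derive; auto.
  - apply (continuous_coords_sumR _ n
      (fun k g => sumR k (fun j => W (dist2 (sym_config n g j) (sym_config n g k))))).
    intros k Hk.
    apply (continuous_coords_sumR _ k (fun j g => W (dist2 (sym_config n g j) (sym_config n g k)))).
    intros j Hj. apply continuous_coords_comp; [|apply continuous_coords_dist2_sym_config; lia].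
    apply continuity_pt_of_ex_derive, (W_ex_derive W HW), dist2_sym_config_pos; auto; lia.
Qed.

(* A gap close to [0] brings two points close together, where [W] is large; a large gap
   stretches a spring, where [U] is large. *)
Lemma V_sym_config_coercive W n T : W_hyp W -> (2 <= n)%nat ->
  exists dl M, 0 < dl <= M /\ forall y, positive_gaps n y ->
    (exists i, (i < Nat.div2 n)%nat /\ (y i < dl \/ M < y i)) -> T < V W n (sym_config n y).
Proof.
  intros HW Hn.
  destruct (W_bounded_below W HW) as [B [HB0 HB]].
  pose (K := V_floor n B).
  destruct (W_large_near_0 W HW (T + K)) as [eps [Heps Hnear]].
  exists (Rmin 1 (eps / 4)), (Rmax 3 (T + K)).
  pose proof (Rmin_l 1 (eps / 4)). pose proof (Rmin_r 1 (eps / 4)).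
  pose proof (Rmax_l 3 (T + K)). pose proof (Rmax_r 3 (T + K)).
  assert (0 < Rmin 1 (eps / 4)) by (apply Rmin_pos; lra).
  split; [lra|]. intros y Hy [i [Hi Hout]].
  assert (Hd : forall j k, (j < n)%nat -> (k < n)%nat -> j <> k ->
            0 < dist2 (sym_config n y j) (sym_config n y k))
    by (intros; apply dist2_sym_config_pos; auto).
  destruct (sym_pos_gap n y Hn Hy i Hi) as [j [Hj Hgap]].
  set (D := sym_pos n y (S j) - sym_pos n y j) in Hgap.
  assert (HD : dist2 (sym_config n y (S j)) (sym_config n y j) = D ^ 2
            /\ dist2 (sym_config n y j) (sym_config n y (S j)) = D ^ 2)
    by (unfold D, dist2, sym_config; simpl; split; ring).
  pose proof (Hy i Hi). destruct Hout as [Hsmall|Hlarge].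
  - pose proof (V_ge_interaction_term W n _ B HB0 HB Hd j Hj) as HV.
    assert (T + K < W (D ^ 2)); [|rewrite (proj2 HD) in HV; unfold K in *; lra].
    apply Hnear. split; [apply pow_lt; lra|].
    assert (D * D <= (2 * y i) * (2 * y i)) by (apply Rmult_le_compat; lra).
    assert (y i * y i < Rmin 1 (eps / 4) * 1) by (apply Rmult_le_0_lt_compat; lra).
    simpl. lra.
  - pose proof (V_ge_chain_term W n _ B HB0 HB Hd j Hj) as HV.
    rewrite (proj1 HD) in HV. pose proof (U_sq_ge D ltac:(lra)). unfold K in *. lra.
Qed.

(* Minimize on a box of gaps outside of which coercivity makes [V] exceed its value at
   unit gaps. *)
Lemma exists_sym_minimizer W n : W_hyp W -> (2 <= n)%nat ->
  exists xs, positive_gaps n xs /\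
    forall y, positive_gaps n y -> V W n (sym_config n xs) <= V W n (sym_config n y).
Proof.
  intros HW Hn.
  pose (V1 := V W n (sym_config n (fun _ => 1))).
  destruct (V_sym_config_coercive W n V1 HW Hn) as [dl [M [Hdl Hout]]].
  pose (lo := Rmin dl 1). pose (hi := Rmax M 1).
  pose proof (Rmin_l dl 1). pose proof (Rmin_r dl 1).
  pose proof (Rmax_l M 1). pose proof (Rmax_r M 1).
  assert (0 < lo) by (apply Rmin_pos; lra).
  destruct (BoxMinimum.box_attains_min (Nat.div2 n) lo hi (fun g => V W n (sym_config n g)))
    as [xs [Hxs Hmin]]; [unfold lo, hi in *; lra| |].
  { intros x Hx. apply continuous_coords_V_sym_config; auto.
    intros i Hi; specialize (Hx i Hi); lra. }
  exists xs; split; [intros i Hi; specialize (Hxs i Hi); lra|].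
  intros y Hy. destruct (classic (in_box (Nat.div2 n) lo hi y)) as [Hin|Hnotin]; [auto|].
  apply Rle_trans with V1; [apply Hmin; intros i _; unfold lo, hi in *; lra|].
  apply Rlt_le, Hout; auto.
  apply not_all_ex_not in Hnotin as [i Hi]. apply imply_to_and in Hi as [Hi Hiout].
  exists i; split; auto. destruct (Rlt_dec (y i) lo); [left; unfold lo in *; lra|right].
  destruct (Rlt_dec hi (y i)); [unfold hi in *; lra|]. exfalso; apply Hiout; lra.
Qed.

(** * The symmetric minimizer is critical *)

Lemma is_derive_local_min_0 (f : R -> R) l d : is_derive f 0 l -> 0 < d ->
  (forall t, - d < t < d -> f 0 <= f t) -> l = 0.
Proof.
  intros Hf Hd Hmin. apply is_derive_Reals in Hf.
  pose (pr := exist (fun l => derivable_pt_lim f 0 l) l Hf : derivable_pt f 0).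
  change l with (derive_pt f 0 pr). apply (deriv_minimum f (- d) d 0 pr); try lra.
  intros; apply Hmin; lra.
Qed.

(* Symmetric criticality: the direction [sym_pos n (indic i)] moves the mirror pairs
   [(m-1-i, n-m+i)], ..., [(0, n-1)] apart, so consecutive differences of these directions
   isolate a single mirror pair, on which [dx] is antisymmetric by [dx_mirror]. *)
Lemma dx_eq0_of_symmetric_directions W n a :
  (forall x, 0 < x -> ex_derive W x) ->
  (forall j k, (j < n)%nat -> (k < n)%nat -> j <> k -> 0 < dist2 (a j) (a k)) ->
  (forall i, (i < n)%nat -> mirror n a i = a i) ->
  (forall i, (i < Nat.div2 n)%nat -> dV W n a (sym_pos n (indic i)) (fun _ => 0) = 0) ->
  forall j, (j < n)%nat -> dx W n a j = 0.
Proof.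
  intros HW Ha Hsym Hdir. pose proof (div2_spec n). set (m := Nat.div2 n) in *.
  assert (Hdir' : forall i, (i <= m)%nat -> dV W n a (sym_pos n (indic i)) (fun _ => 0) = 0).
  { intros i Hi. destruct (Nat.eq_dec i m) as [->|]; [|apply Hdir; lia].
    rewrite (dV_ext W n a _ _ (fun k => 0 * indic 0 k + 0 * indic 0 k) (fun k => 0 * 0 + 0 * 0)).
    - rewrite dV_linear; ring.
    - intros; rewrite sym_pos_indic_div2 by auto; ring.
    - intros; ring. }
  assert (Hpair : forall i, (i < m)%nat -> dx W n a (n - m + i) - dx W n a (m - 1 - i) = 0).
  { intros i Hi.
    transitivity (dV W n a (fun k => 1 * indic (n - m + i) k + -1 * indic (m - 1 - i) k)
                           (fun k => 1 * 0 + -1 * 0)); [rewrite dV_linear; unfold dx; ring|].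
    rewrite (dV_ext W n a _ _ (fun k => 1 * sym_pos n (indic i) k + -1 * sym_pos n (indic (S i)) k)
               (fun k => 1 * 0 + -1 * 0)).
    - rewrite dV_linear, !Hdir' by lia. ring.
    - intros k Hk. pose proof (sym_pos_indic_diff n i k Hi Hk) as Hdiff. fold m in Hdiff. lra.
    - auto. }
  intros j Hj. pose proof (dx_mirror W n a j HW Ha Hsym Hj) as Hmirror_j.
  destruct (Nat.leb_spec (n - m) j); [|destruct (Nat.ltb_spec j m)].
  - pose proof (Hpair (j - (n - m))%nat ltac:(lia)) as Hp.
    replace (n - m + (j - (n - m)))%nat with j in Hp by lia.
    replace (m - 1 - (j - (n - m)))%nat with (n - 1 - j)%nat in Hp by lia. lra.
  - pose proof (Hpair (m - 1 - j)%nat ltac:(lia)) as Hp.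
    replace (n - m + (m - 1 - j))%nat with (n - 1 - j)%nat in Hp by lia.
    replace (m - 1 - (m - 1 - j))%nat with j in Hp by lia. lra.
  - replace (n - 1 - j)%nat with j in Hmirror_j by lia. lra.
Qed.

Lemma dx_sym_minimizer W n xs : W_hyp W -> (2 <= n)%nat -> positive_gaps n xs ->
  (forall y, positive_gaps n y -> V W n (sym_config n xs) <= V W n (sym_config n y)) ->
  forall j, (j < n)%nat -> dx W n (sym_config n xs) j = 0.
Proof.
  intros HW Hn Hxs Hmin.
  apply dx_eq0_of_symmetric_directions.
  - apply W_ex_derive, HW.
  - intros; apply dist2_sym_config_pos; auto.
  - apply mirror_sym_config.
  - intros i Hi.
    assert (Hshift : forall t, shift (sym_config n xs) (sym_pos n (indic i)) (fun _ => 0) t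
                             = sym_config n (fun k => xs k + t * indic i k)).
    { intros t. apply functional_extensionality; intros k.
      unfold shift, sym_config; simpl. rewrite sym_pos_linear. f_equal; ring. }
    apply (is_derive_local_min_0
             (fun t => V W n (shift (sym_config n xs) (sym_pos n (indic i)) (fun _ => 0) t))
             _ (xs i)).
    + apply is_derive_V_shift; [apply W_ex_derive, HW|].
      intros; apply dist2_sym_config_pos; auto.
    + apply Hxs; auto.
    + intros t Ht. rewrite !Hshift.
      replace (fun k => xs k + 0 * indic i k) with xs
        by (apply functional_extensionality; intros; ring).
      apply Hmin. intros k Hk. specialize (Hxs k Hk). unfold indic.
      destruct (Nat.eqb_spec k i) as [->|]; lra.
Qed.

Lemma V_upd_horizontal W n a j t :
  V W n (upd a j (fst (a j) + t, snd (a j))) = V W n (shift a (indic j) (fun _ => 0) t).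
Proof.
  apply V_ext; intros k _. unfold upd, shift, indic.
  destruct (Nat.eqb_spec k j) as [->|]; apply injective_projections; simpl; ring.
Qed.

Lemma V_upd_vertical W n a j t :
  V W n (upd a j (fst (a j), snd (a j) + t)) = V W n (shift a (fun _ => 0) (indic j) t).
Proof.
  apply V_ext; intros k _. unfold upd, shift, indic.
  destruct (Nat.eqb_spec k j) as [->|]; apply injective_projections; simpl; ring.
Qed.

Lemma in_Omega_of_dist2_pos n u :
  (forall j k, (j < n)%nat -> (k < n)%nat -> j <> k -> 0 < dist2 (u j) (u k)) -> in_Omega n u.
Proof.
  intros Hu j k Hj Hk Hjk Heq. pose proof (Hu j k Hj Hk Hjk) as Hd.
  rewrite Heq in Hd. unfold dist2 in Hd. rewrite !Rminus_diag in Hd. simpl in Hd. lra.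
Qed.

Lemma critical_point_on_axis W n a :
  (forall x, 0 < x -> ex_derive W x) ->
  (forall j k, (j < n)%nat -> (k < n)%nat -> j <> k -> 0 < dist2 (a j) (a k)) ->
  (forall i, (i < n)%nat -> snd (a i) = 0) ->
  (forall j, (j < n)%nat -> dx W n a j = 0) -> critical_point W n a.
Proof.
  intros HW Ha Haxis Hdx j Hj. split.
  - apply (is_derive_ext _ _ _ _ (fun t => eq_sym (V_upd_horizontal W n a j t))).
    pose proof (is_derive_V_shift W n a (indic j) (fun _ => 0) HW Ha) as Hd.
    fold (dx W n a j) in Hd. rewrite Hdx in Hd; auto.
  - apply (is_derive_ext _ _ _ _ (fun t => eq_sym (V_upd_vertical W n a j t))).
    pose proof (is_derive_V_shift W n a (fun _ => 0) (indic j) HW Ha) as Hd.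
    rewrite dV_vertical_on_axis in Hd; auto.
Qed.

Theorem corollary1 (W : R -> R) (n : nat) :
  W_hyp W -> (2 <= n)%nat ->
  exists (a : nat -> pt) (p : nat -> R),
    in_Omega n a /\
    critical_point W n a /\
    (forall j : nat, (j < n)%nat -> a j = (p j, 0)) /\
    (forall j : nat, (S j < n)%nat -> p j < p (S j)) /\
    (forall j : nat, (j < n)%nat -> p (n - 1 - j)%nat = - p j).
Proof.
  intros HW Hn.
  destruct (exists_sym_minimizer W n HW Hn) as [xs [Hxs Hmin]].
  assert (Hdist : forall j k, (j < n)%nat -> (k < n)%nat -> j <> k ->
                    0 < dist2 (sym_config n xs j) (sym_config n xs k))
    by (intros; apply dist2_sym_config_pos; auto).
  exists (sym_config n xs), (sym_pos n xs).
  split; [|split; [|split; [|split]]].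
  - apply in_Omega_of_dist2_pos, Hdist.
  - apply critical_point_on_axis; auto.
    + apply W_ex_derive, HW.
    + apply dx_sym_minimizer; auto.
  - reflexivity.
  - intros j Hj. apply sym_pos_lt_succ; auto.
  - intros j Hj. apply sym_pos_antisym; auto.
Qed.
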